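(* Let $x,h$ be real numbers with $0\le x<x+h<1$, and write $x=\sum_{k\ge1}2^{-k}\varepsilon_k$, $x+h=\sum_{k\ge1}2^{-k}\varepsilon'_k$ with $\varepsilon_k,\varepsilon'_k\in\{0,1\}$, where for dyadic rationals the expansion that is eventually all zeros is chosen. Let $p$ be the nonnegative integer with $2^{-p-1}<h\le 2^{-p}$, and let $k_0:=\max\{k:\varepsilon_1=\varepsilon'_1,\dots,\varepsilon_k=\varepsilon'_k\}$ (with $k_0=0$ if $\varepsilon_1\ne\varepsilon'_1$). Assume $k_0<p$. Then $$\sum_{k=p+1}^\infty 2^{-k}(1-\varepsilon_k-\varepsilon'_k)\le h.$$ Moreover, if $m\ge0$ is an integer with $\varepsilon_{p+m+1}=0$, then $$\sum_{k=p+1}^\infty 2^{-k}(1-\varepsilon_k-\varepsilon'_k)\ge -h(1-2^{-m}).$$ *)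

From Stdlib Require Import Reals ZArith.
From Coquelicot Require Import Coquelicot.
Open Scope R_scope.

(* k-th binary digit of x in [0,1): eps_k = floor(2^k x) mod 2.
   For dyadic rationals this yields the expansion that is eventually 0. *)
Definition bdigit (k : nat) (x : R) : R :=
  IZR (Z.modulo (Int_part (x * 2 ^ k)) 2).

From Stdlib Require Import Reals ZArith Lra Lia.
From Coquelicot Require Import Coquelicot.
Open Scope R_scope.

(* The digits telescope: 2^-(k+1) eps_(k+1)(t) = 2^-k {2^k t} - 2^-(k+1) {2^(k+1) t},
   so with u = 2^p x and v = 2^p (x+h) the series equals 2^-p (1 - {u} - {v}).
   Since x and x+h differ in a digit of index <= p while 0 < v - u <= 1, the
   floors of u and v differ by exactly one, which gives 1 - {u} = 2^p h - {v}
   and hence 1 - {u} - {v} = 2^p h - 2 {v} <= 2^p h.  For the lower bound,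
   eps_(p+m+1)(x) = 0 forces {u} < 1 - 2^-(m+1). *)

Lemma Int_part_ge (r : R) (z : Z) : IZR z <= r -> (z <= Int_part r)%Z.
Proof.
  intros Hz. destruct (base_Int_part r) as [_ Hr].
  assert (Hlt : IZR z < IZR (Int_part r + 1)) by (rewrite plus_IZR; lra).
  apply lt_IZR in Hlt. lia.
Qed.

Lemma Int_part_lt (r : R) (z : Z) : r < IZR z -> (Int_part r < z)%Z.
Proof.
  intros Hz. destruct (base_Int_part r) as [Hr _].
  apply lt_IZR. lra.
Qed.

Lemma Int_part_carry (u v : R) :
  u <= v <= u + 1 -> Int_part u <> Int_part v ->
  Int_part v = (Int_part u + 1)%Z.
Proof.
  intros [Huv Hvu] Hneq. destruct (base_Int_part u) as [Hu1 Hu2].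
  assert (Hge : (Int_part u <= Int_part v)%Z) by (apply Int_part_ge; lra).
  assert (Hlt : (Int_part v < Int_part u + 2)%Z)
    by (apply Int_part_lt; rewrite plus_IZR; lra).
  lia.
Qed.

Lemma Int_part_scaled_eq (a b : R) (K : Z) :
  (0 < K)%Z -> Int_part (a * IZR K) = Int_part (b * IZR K) ->
  Int_part a = Int_part b.
Proof.
  intros HK Heq. apply IZR_lt in HK.
  assert (Hbounds : forall c, (Int_part c * K <= Int_part (c * IZR K)
                                < (Int_part c + 1) * K)%Z).
  { intros c. destruct (base_Int_part c) as [Hc1 Hc2]. split.
    - apply Int_part_ge. rewrite mult_IZR. apply Rmult_le_compat_r; lra.
    - apply Int_part_lt. rewrite mult_IZR, plus_IZR.
      apply Rmult_lt_compat_r; lra. }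
  apply lt_IZR in HK.
  pose proof (Hbounds a). pose proof (Hbounds b). nia.
Qed.

Lemma bdigit_eq_of_Int_part_eq (j p : nat) (x y : R) :
  (j <= p)%nat -> Int_part (x * 2 ^ p) = Int_part (y * 2 ^ p) ->
  bdigit j x = bdigit j y.
Proof.
  intros Hjp Heq. unfold bdigit. do 2 f_equal.
  apply (Int_part_scaled_eq _ _ (2 ^ Z.of_nat (p - j))).
  - apply Z.pow_pos_nonneg; lia.
  - rewrite <- pow_IZR, !Rmult_assoc, <- pow_add.
    replace (j + (p - j))%nat with p by lia. exact Heq.
Qed.

Lemma bdigit_S (k : nat) (t : R) :
  bdigit (S k) t = 2 * frac_part (t * 2 ^ k) - frac_part (t * 2 ^ S k).
Proof.
  unfold bdigit, frac_part.
  replace (t * 2 ^ S k) with (2 * (t * 2 ^ k)) by (simpl; ring).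
  set (s := t * 2 ^ k). set (z := Int_part s).
  destruct (base_Int_part s) as [Hs1 Hs2]. fold z in Hs1, Hs2.
  destruct (Rlt_le_dec s (IZR z + 1/2)).
  - rewrite <- (Int_part_spec (2 * s) (2 * z)) by (rewrite mult_IZR; lra).
    rewrite Z.mul_comm, Z_mod_mult, mult_IZR. lra.
  - rewrite <- (Int_part_spec (2 * s) (2 * z + 1))
      by (rewrite plus_IZR, mult_IZR; lra).
    rewrite Z.add_comm, Z.mul_comm, Z_mod_plus_full, plus_IZR, mult_IZR.
    change (1 mod 2)%Z with 1%Z. lra.
Qed.

Lemma frac_part_scaled_lt (a : R) (K : Z) :
  (0 < K)%Z -> frac_part (a * IZR K) < 1/2 -> frac_part a < 1 - / (2 * IZR K).
Proof.
  unfold frac_part. intros HK Hfrac.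
  set (n := Int_part a) in *. set (c := Int_part (a * IZR K)) in *.
  destruct (base_Int_part a) as [Ha1 Ha2]. fold n in Ha1, Ha2.
  assert (HKpos : 0 < IZR K) by (apply IZR_lt; exact HK).
  assert (Hc : (c + 1 <= (n + 1) * K)%Z).
  { enough (c < (n + 1) * K)%Z by lia.
    apply Int_part_lt. rewrite mult_IZR, plus_IZR.
    apply Rmult_lt_compat_r; lra. }
  apply IZR_le in Hc. rewrite mult_IZR, !plus_IZR in Hc.
  apply Rmult_lt_reg_r with (IZR K); [exact HKpos|].
  replace ((1 - / (2 * IZR K)) * IZR K) with (IZR K - 1/2) by (field; lra).
  lra.
Qed.

Lemma half_pow_mul (n : nat) : (1/2) ^ n * 2 ^ n = 1.
Proof.
  rewrite <- Rpow_mult_distr. replace (1/2 * 2) with 1 by lra. apply pow1.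
Qed.

Lemma frac_part_lt_of_bdigit_eq0 (p m : nat) (t : R) :
  bdigit (p + m + 1) t = 0 -> frac_part (t * 2 ^ p) < 1 - (1/2) ^ S m.
Proof.
  intros Hdigit.
  replace (p + m + 1)%nat with (S (p + m)) in Hdigit by lia.
  rewrite bdigit_S in Hdigit.
  destruct (base_fp (t * 2 ^ S (p + m))) as [_ Hlt1].
  assert (Hhalf : frac_part (t * 2 ^ p * IZR (2 ^ Z.of_nat m)) < 1/2).
  { rewrite <- pow_IZR, Rmult_assoc, <- pow_add. lra. }
  apply frac_part_scaled_lt in Hhalf; [|apply Z.pow_pos_nonneg; lia].
  rewrite <- pow_IZR in Hhalf.
  replace ((1/2) ^ S m) with (/ (2 * 2 ^ m)); [exact Hhalf|].
  pose proof (half_pow_mul m). pose proof (pow_lt 2 m ltac:(lra)).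
  simpl. field_simplify_eq; lra.
Qed.

Lemma is_series_telescope (w : nat -> R) :
  is_lim_seq w 0 -> is_series (fun n => w n - w (S n)) (w O).
Proof.
  intros Hw. change (is_lim_seq (sum_n (fun n => w n - w (S n))) (w O)).
  apply (is_lim_seq_ext (fun N => w O - w (S N))).
  - induction n as [|n IH].
    + rewrite sum_O. reflexivity.
    + rewrite sum_Sn, <- IH. unfold plus; simpl. ring.
  - replace (Finite (w O)) with (Rbar_minus (w O) 0)
      by (simpl; f_equal; ring).
    apply is_lim_seq_minus'; [apply is_lim_seq_const|].
    apply (is_lim_seq_incr_1 w). exact Hw.
Qed.

Lemma is_series_bdigit_tail (p : nat) (t : R) :
  is_series (fun n => (1/2) ^ (p + 1 + n) * bdigit (p + 1 + n) t)
    ((1/2) ^ p * frac_part (t * 2 ^ p)).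
Proof.
  set (w := fun n => (1/2) ^ (p + n) * frac_part (t * 2 ^ (p + n))).
  replace ((1/2) ^ p * frac_part (t * 2 ^ p)) with (w O)
    by (unfold w; rewrite Nat.add_0_r; reflexivity).
  apply (is_series_ext (fun n => w n - w (S n))).
  { intros n. unfold w.
    replace (p + 1 + n)%nat with (S (p + n)) by lia.
    rewrite Nat.add_succ_r, bdigit_S. simpl. field. }
  apply is_series_telescope.
  apply is_lim_seq_le_le with (u := fun _ => 0) (w := fun n => (1/2) ^ n).
  - intros n. unfold w. rewrite pow_add.
    destruct (base_fp (t * 2 ^ (p + n))) as [Hf0 Hf1].
    assert (Hp : 0 <= (1/2) ^ p <= 1).
    { split; [apply pow_le; lra|].
      apply (Rle_trans _ (1 ^ p)); [apply pow_incr; lra | rewrite pow1; lra]. }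
    pose proof (pow_lt (1/2) n ltac:(lra)).
    split.
    + apply Rmult_le_pos; [apply Rmult_le_pos|]; lra.
    + assert ((1/2) ^ p * frac_part (t * 2 ^ (p + n)) <= 1) by nra. nra.
  - apply is_lim_seq_const.
  - apply is_lim_seq_geom. rewrite Rabs_pos_eq; lra.
Qed.

Lemma is_series_digit_sum (p : nat) (x y : R) :
  is_series
    (fun n => (1/2) ^ (p + 1 + n) *
              (1 - bdigit (p + 1 + n) x - bdigit (p + 1 + n) y))
    ((1/2) ^ p * (1 - frac_part (x * 2 ^ p) - frac_part (y * 2 ^ p))).
Proof.
  assert (Hgeom : is_series (fun n => (1/2) ^ (p + 1 + n)) ((1/2) ^ p)).
  { apply (is_series_ext (fun n => scal ((1/2) ^ (p + 1)) ((1/2) ^ n))).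
    { intros n. unfold scal; simpl; unfold mult; simpl. rewrite !pow_add. ring. }
    replace ((1/2) ^ p) with (scal ((1/2) ^ (p + 1)) (/ (1 - 1/2)))
      by (unfold scal; simpl; unfold mult; simpl; rewrite pow_add; field).
    apply (is_series_scal_l ((1/2) ^ (p + 1)) (fun n => (1/2) ^ n)), is_series_geom.
    rewrite Rabs_pos_eq; lra. }
  pose proof (is_series_minus _ _ _ _
                (is_series_minus _ _ _ _ Hgeom (is_series_bdigit_tail p x))
                (is_series_bdigit_tail p y)) as Hsum.
  unfold minus, plus, opp in Hsum; simpl in Hsum.
  replace ((1/2) ^ p * (1 - frac_part (x * 2 ^ p) - frac_part (y * 2 ^ p)))
    with ((1/2) ^ p + - ((1/2) ^ p * frac_part (x * 2 ^ p))
          + - ((1/2) ^ p * frac_part (y * 2 ^ p))) by ring.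
  eapply is_series_ext; [|exact Hsum]. intros n. simpl. ring.
Qed.

Theorem lemma1 (x h : R) (p k0 : nat)
  (hx0 : 0 <= x) (hh : 0 < h) (hx1 : x + h < 1)
  (hp : (1/2) ^ (p + 1) < h /\ h <= (1/2) ^ p)
  (hk0agree : forall j : nat, (1 <= j <= k0)%nat -> bdigit j x = bdigit j (x + h))
  (hk0diff : bdigit (k0 + 1) x <> bdigit (k0 + 1) (x + h))
  (hk0p : (k0 < p)%nat) :
  let S := Series (fun n : nat =>
             (1/2) ^ (p + 1 + n) *
             (1 - bdigit (p + 1 + n) x - bdigit (p + 1 + n) (x + h))) in
  S <= h /\
  (forall m : nat, bdigit (p + m + 1) x = 0 -> - h * (1 - (1/2) ^ m) <= S).
Proof.
  intros S.
  set (u := x * 2 ^ p). set (v := (x + h) * 2 ^ p). set (H := h * 2 ^ p).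
  assert (HS : S = (1/2) ^ p * (1 - frac_part u - frac_part v))
    by apply is_series_unique, is_series_digit_sum.
  assert (Hq : 0 < (1/2) ^ p) by (apply pow_lt; lra).
  assert (Hh : h = (1/2) ^ p * H).
  { unfold H. rewrite <- Rmult_assoc, (Rmult_comm _ h), Rmult_assoc, half_pow_mul. ring. }
  assert (HH : 0 < H <= 1) by (rewrite Hh in hh, hp; nra).
  assert (Hv : v = u + H) by (unfold u, v, H; ring).
  assert (Hcarry : Int_part v = (Int_part u + 1)%Z).
  { apply Int_part_carry; [lra|].
    intros Heq. apply hk0diff, (bdigit_eq_of_Int_part_eq _ p); [lia | exact Heq]. }
  assert (Hfrac : 1 - frac_part u = H - frac_part v).
  { unfold frac_part. rewrite Hcarry, plus_IZR. lra. }
  destruct (base_fp v) as [Hv0 _].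
  split.
  - rewrite HS, Hh. apply Rmult_le_compat_l; lra.
  - intros m Hm. apply frac_part_lt_of_bdigit_eq0 in Hm. fold u in Hm.
    simpl in Hm. pose proof (pow_lt (1/2) m ltac:(lra)).
    rewrite HS, Hh.
    replace (- ((1/2) ^ p * H) * (1 - (1/2) ^ m))
      with ((1/2) ^ p * (- H * (1 - (1/2) ^ m))) by ring.
    apply Rmult_le_compat_l; [lra | nra].
Qed.
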